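(* Let $A_1A_2A_3$ be a triangle in a Euclidean space $\mathbb{R}^n$, $n\ge2$, with angles $\alpha_k$ at $A_k$. For $0\le t_1\le1$ let $P=(1-t_1)A_1+t_1A_2$, and let $Q$ be the foot of the corresponding circumcevian, i.e. the point other than $A_3$ where the ray from $A_3$ through $P$ meets the circumcircle of the triangle. Then $Q=\frac{m_1A_1+m_2A_2+m_3A_3}{m_1+m_2+m_3}$ with $m_1=\{\sin^2\alpha_2+t_1\sin(\alpha_1-\alpha_2)\sin\alpha_3\}(1-t_1)$, $m_2=\{\sin^2\alpha_2+t_1\sin(\alpha_1-\alpha_2)\sin\alpha_3\}t_1$, $m_3=-(1-t_1)t_1\sin^2\alpha_3$.
   Context: Barycentric coordinates with respect to the (affinely independent) vertices $A_1,A_2,A_3$; they are homogeneous. *)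

From HB Require Import structures.
From mathcomp Require Import all_boot all_order all_algebra.
From mathcomp Require Import all_classical all_reals all_analysis.
Set Implicit Arguments. Unset Strict Implicit. Unset Printing Implicit Defensive.
Import Order.TTheory GRing.Theory Num.Theory.
Local Open Scope ring_scope.

Definition dotv (R : realType) (n : nat) (u v : 'rV[R]_n) : R := (u *m v^T) 0 0.
Definition normv (R : realType) (n : nat) (u : 'rV[R]_n) : R := Num.sqrt (dotv u u).

Definition vangle (R : realType) (n : nat) (A B C : 'rV[R]_n) : R :=
  acos (dotv (B - A) (C - A) / (normv (B - A) * normv (C - A))).

Definition is_triangle (R : realType) (n : nat) (A1 A2 A3 : 'rV[R]_n) : Prop :=
  \rank (col_mx (A2 - A1) (A3 - A1)) = 2%N.

Definition in_plane (R : realType) (n : nat) (A1 A2 A3 X : 'rV[R]_n) : Prop :=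
  exists a1 a2 a3 : R, a1 + a2 + a3 = 1 /\ X = a1 *: A1 + a2 *: A2 + a3 *: A3.

Definition on_circumcircle (R : realType) (n : nat) (A1 A2 A3 X : 'rV[R]_n) : Prop :=
  in_plane A1 A2 A3 X /\
  exists O : 'rV[R]_n, in_plane A1 A2 A3 O /\
    normv (A2 - O) = normv (A1 - O) /\ normv (A3 - O) = normv (A1 - O) /\
    normv (X - O) = normv (A1 - O).

Definition on_ray (R : realType) (n : nat) (A B X : 'rV[R]_n) : Prop :=
  exists s : R, 0 <= s /\ X = A + s *: (B - A).

From HB Require Import structures.
From mathcomp Require Import all_boot all_order all_algebra.
From mathcomp Require Import all_classical all_reals all_analysis.
From mathcomp Require Import ring lra.
Import Order.TTheory GRing.Theory Num.Theory.
Local Open Scope ring_scope.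

(* Write u = A2 - A1, v = A3 - A1 and express everything through the Gram
   data p = |u|^2, q = |v|^2, r = u.v, whose Gram determinant pq - r^2 is
   positive for a triangle.  A point A1 + x u + y v of the plane lies on the
   circumcircle iff |x u + y v|^2 = x p + y q (the circle passes through A1),
   which for Q = A3 + s (P - A3) gives s = (q + t1 (p - 2r)) / |t1 u - v|^2.
   On the other side, each sin(alpha_k) is the square root of the Gram
   determinant divided by the two sides at A_k, so sin(alpha_2)^2,
   sin(alpha_3)^2 and sin(alpha_1 - alpha_2) sin(alpha_3) are q, p and p - 2r
   times a common factor; the weights m_k are then, up to that factor, the
   barycentric coordinates of A1 + s t1 u + (1 - s) v. *)

Section DotProduct.
Context {R : realType} {n : nat}.
Implicit Types (x y z : 'rV[R]_n) (a b c d : R).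

Lemma dotvC x y : dotv x y = dotv y x.
Proof. by rewrite /dotv -[in LHS](trmxK (x *m y^T)) trmx_mul trmxK mxE. Qed.

Lemma dotvDl x y z : dotv (x + y) z = dotv x z + dotv y z.
Proof. by rewrite /dotv mulmxDl mxE. Qed.

Lemma dotvZl a x z : dotv (a *: x) z = a * dotv x z.
Proof. by rewrite /dotv -scalemxAl mxE. Qed.

Lemma dotvNl x z : dotv (- x) z = - dotv x z.
Proof. by rewrite -scaleN1r dotvZl mulN1r. Qed.

Lemma dotvBl x y z : dotv (x - y) z = dotv x z - dotv y z.
Proof. by rewrite dotvDl dotvNl. Qed.

Lemma dotvDr x y z : dotv z (x + y) = dotv z x + dotv z y.
Proof. by rewrite dotvC dotvDl !(dotvC z). Qed.

Lemma dotvZr a x z : dotv z (a *: x) = a * dotv z x.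
Proof. by rewrite dotvC dotvZl dotvC. Qed.

Lemma dotvNr x z : dotv z (- x) = - dotv z x.
Proof. by rewrite dotvC dotvNl dotvC. Qed.

Lemma dotvBr x y z : dotv z (x - y) = dotv z x - dotv z y.
Proof. by rewrite dotvDr dotvNr. Qed.

Lemma dotv_lincomb a b c d x y :
  dotv (a *: x + b *: y) (c *: x + d *: y) =
  a * c * dotv x x + (a * d + b * c) * dotv x y + b * d * dotv y y.
Proof. by rewrite !(dotvDl, dotvDr, dotvZl, dotvZr) (dotvC y x); ring. Qed.

Lemma dotvv_sum x : dotv x x = \sum_j x 0 j ^+ 2.
Proof. by rewrite /dotv mxE; apply: eq_bigr => j _; rewrite mxE expr2. Qed.

Lemma dotvv_ge0 x : 0 <= dotv x x.
Proof. by rewrite dotvv_sum; apply: sumr_ge0 => j _; apply: sqr_ge0. Qed.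

Lemma dotvv_eq0 x : dotv x x = 0 -> x = 0.
Proof.
rewrite dotvv_sum => x0; apply/rowP => j; rewrite mxE.
have /eqP := psumr_eq0P (fun i _ => sqr_ge0 (x 0 i)) x0 (i := j) isT.
by rewrite sqrf_eq0 => /eqP.
Qed.

Lemma normv_sqr x : normv x ^+ 2 = dotv x x.
Proof. by rewrite /normv sqr_sqrtr // dotvv_ge0. Qed.

Lemma normvN x : normv (- x) = normv x.
Proof. by rewrite /normv dotvNl dotvNr opprK. Qed.

Definition gramv x y := dotv x x * dotv y y - dotv x y ^+ 2.

Lemma rank2_lin_indep {x y} a b :
  \rank (col_mx x y) = 2%N -> a *: x + b *: y = 0 -> a = 0 /\ b = 0.
Proof.
move=> rk2 comb0.
have free : row_free (col_mx x y) by rewrite /row_free rk2.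
have := row_free_inj free (x1 := row_mx a%:M b%:M) (x2 := 0).
rewrite mul_row_col !mul_scalar_mx comb0 mul0mx => /(_ erefl).
rewrite -row_mx0 => /eq_row_mx[/matrixP/(_ 0 0) + /matrixP/(_ 0 0)].
by rewrite !mxE.
Qed.

Lemma gramv_gt0 x y : \rank (col_mx x y) = 2%N -> 0 < gramv x y.
Proof.
move=> rk2; set q := dotv y y; set r := dotv x y.
have gram_q : dotv (q *: x + (- r) *: y) (q *: x + (- r) *: y) = q * gramv x y.
  by rewrite dotv_lincomb /gramv -/q -/r; ring.
have q_gt0 : 0 < q.
  rewrite lt_neqAle dotvv_ge0 andbT; apply/eqP => /esym/dotvv_eq0 y0.
  have [] := rank2_lin_indep 0 1 rk2; first by rewrite y0 scale0r scaler0 addr0.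
  by move=> _ /eqP; rewrite oner_eq0.
rewrite lt_neqAle -(pmulr_rge0 _ q_gt0) -gram_q dotvv_ge0 andbT.
apply/eqP => /esym gram0.
move: gram_q; rewrite gram0 mulr0 => /dotvv_eq0/(rank2_lin_indep _ _ rk2)[q0 _].
by move: q_gt0; rewrite q0 ltxx.
Qed.

Lemma gramv_gt0_dotvv {x y} : 0 < gramv x y -> 0 < dotv x x /\ 0 < dotv y y.
Proof.
rewrite /gramv => gram_gt0.
have := dotvv_ge0 x; have := dotvv_ge0 y; have := sqr_ge0 (dotv x y).
by move=> *; split; nra.
Qed.

Lemma normv_gt0 {x} : 0 < dotv x x -> 0 < normv x.
Proof. by move=> ?; rewrite sqrtr_gt0. Qed.

Lemma normv_subC x y : normv (x - y) = normv (y - x).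
Proof. by rewrite -normvN opprB. Qed.

Lemma gramv_cycle x y z : gramv (z - y) (x - y) = gramv (y - x) (z - x).
Proof.
rewrite /gramv !(dotvBl, dotvBr) (dotvC z x) (dotvC z y) (dotvC y x); ring.
Qed.

Lemma dotv_cosine_rule x y z :
  dotv (y - x) (z - x) = (normv (y - x) ^+ 2 + normv (z - x) ^+ 2 - normv (z - y) ^+ 2) / 2.
Proof.
rewrite !normv_sqr !(dotvBl, dotvBr) (dotvC z x) (dotvC z y) (dotvC y x).
by field.
Qed.

(* On a circle through the origin with centre z, |w|^2 = 2 w.z is linear in w. *)
Lemma on_circle_origin {x y z a b} :
  normv (x - z) = normv z -> normv (y - z) = normv z ->
  normv (a *: x + b *: y - z) = normv z ->
  dotv (a *: x + b *: y) (a *: x + b *: y) = a * dotv x x + b * dotv y y.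
Proof.
have diam w : normv (w - z) = normv z -> dotv w w = 2 * dotv w z.
  move=> /(congr1 (fun e => e ^+ 2)); rewrite !normv_sqr.
  by rewrite !(dotvBl, dotvBr) (dotvC z w) => ?; lra.
move=> /diam xz /diam yz /diam ->.
by rewrite dotvDl !dotvZl xz yz; ring.
Qed.

End DotProduct.

Lemma sin_cos_acos_ratio {R : realType} (N X Y g : R) :
  0 < X -> 0 < Y -> 0 <= g -> X ^+ 2 * Y ^+ 2 - N ^+ 2 = g ^+ 2 ->
  sin (acos (N / (X * Y))) = g / (X * Y) /\ cos (acos (N / (X * Y))) = N / (X * Y).
Proof.
move=> X_gt0 Y_gt0 g_ge0 gram.
have XY_gt0 : 0 < X * Y by apply: mulr_gt0.
have sin2 : 1 - (N / (X * Y)) ^+ 2 = (g / (X * Y)) ^+ 2.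
  by rewrite !expr_div_n -gram; field; rewrite !gt_eqF.
have cos_in : -1 <= N / (X * Y) <= 1.
  have : (N / (X * Y)) ^+ 2 <= 1 by rewrite -subr_ge0 sin2 sqr_ge0.
  by set w := N / (X * Y) => w2; apply/andP; split; nra.
split; last by rewrite acosK // in_itv.
by rewrite sin_acos // sin2 sqrtr_sqr ger0_norm // divr_ge0 // ltW.
Qed.

Lemma vangle_sin_cos {R : realType} {n : nat} {A B C : 'rV[R]_n} :
  0 < normv (B - A) -> 0 < normv (C - A) -> 0 <= gramv (B - A) (C - A) ->
  let N := normv (B - A) * normv (C - A) in
  sin (vangle A B C) = Num.sqrt (gramv (B - A) (C - A)) / N /\
  cos (vangle A B C) = dotv (B - A) (C - A) / N.
Proof.
move=> AB_gt0 AC_gt0 gram_ge0 N; apply: sin_cos_acos_ratio => //.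
by rewrite !normv_sqr sqr_sqrtr.
Qed.

Section Triangle.
Context {R : realType} {n : nat} {A1 A2 A3 : 'rV[R]_n}.
Hypothesis triangle : is_triangle A1 A2 A3.

Local Notation u := (A2 - A1).
Local Notation v := (A3 - A1).
Local Notation p := (dotv u u).
Local Notation q := (dotv v v).
Local Notation r := (dotv u v).
Local Notation a1 := (vangle A1 A2 A3).
Local Notation a2 := (vangle A2 A3 A1).
Local Notation a3 := (vangle A3 A1 A2).

Lemma triangle_gram_gt0 : 0 < gramv u v.
Proof. exact: gramv_gt0. Qed.

Lemma triangle_sin_cos :
  let g := Num.sqrt (gramv u v) in
  let a := normv (A3 - A2) in let b := normv v in let c := normv u in
  [/\ sin a1 = g / (c * b), cos a1 = r / (c * b),
      sin a2 = g / (a * c), cos a2 = dotv (A3 - A2) (A1 - A2) / (a * c)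
    & sin a3 = g / (b * a)].
Proof.
move=> g a b c.
have gram_gt0 := triangle_gram_gt0.
have gram2_gt0 : 0 < gramv (A3 - A2) (A1 - A2) by rewrite gramv_cycle.
have [c_gt0 b_gt0] := gramv_gt0_dotvv gram_gt0.
have [a_gt0 _] := gramv_gt0_dotvv gram2_gt0.
have [s1 c1] := vangle_sin_cos (normv_gt0 c_gt0) (normv_gt0 b_gt0) (ltW gram_gt0).
have := vangle_sin_cos (normv_gt0 a_gt0) _ (ltW gram2_gt0).
rewrite gramv_cycle (normv_subC A1 A2) => /(_ (normv_gt0 c_gt0))[s2 c2].
have := vangle_sin_cos (A := A3) (B := A1) (C := A2).
rewrite 2!gramv_cycle (normv_subC A1 A3) (normv_subC A2 A3).
move=> /(_ (normv_gt0 b_gt0) (normv_gt0 a_gt0) (ltW gram_gt0))[s3 _].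
by split.
Qed.

Lemma triangle_sin_weights :
  exists2 K, 0 < K & [/\ sin a2 ^+ 2 = K * q, sin a3 ^+ 2 = K * p
                      & sin (a1 - a2) * sin a3 = K * (p - 2 * r)].
Proof.
have [s1 c1 s2 c2 s3] := triangle_sin_cos.
have gram_gt0 := triangle_gram_gt0.
have [p_gt0 q_gt0] := gramv_gt0_dotvv gram_gt0.
have gram2_gt0 : 0 < gramv (A3 - A2) (A1 - A2) by rewrite gramv_cycle.
have [w_gt0 _] := gramv_gt0_dotvv gram2_gt0.
have [c_gt0 b_gt0 a_gt0] := And3 (normv_gt0 p_gt0) (normv_gt0 q_gt0) (normv_gt0 w_gt0).
exists (gramv u v / (p * q * dotv (A3 - A2) (A3 - A2))).
  by rewrite divr_gt0 // !mulr_gt0.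
have g2 := sqr_sqrtr (ltW gram_gt0).
have g_gt0 : 0 < Num.sqrt (gramv u v) by rewrite sqrtr_gt0.
rewrite sinB s1 c1 s2 c2 s3 -!normv_sqr (dotv_cosine_rule A1) (dotv_cosine_rule A2).
rewrite (normv_subC A1 A2) (normv_subC A1 A3).
move: g2 g_gt0; set g := Num.sqrt _ => g2 g_gt0; clearbody g; rewrite -g2.
by split; field; rewrite ?gt_eqF.
Qed.

Lemma triangle_cevian_gt0 t : 0 < t ^+ 2 * p - 2 * t * r + q.
Proof.
have gram_gt0 := triangle_gram_gt0; have [p_gt0 _] := gramv_gt0_dotvv gram_gt0.
by move: gram_gt0; rewrite /gramv; have := sqr_ge0 (t * p - r); nra.
Qed.

Lemma circumcevian_ratio {t s : R} {O : 'rV[R]_n} :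
  normv (A2 - O) = normv (A1 - O) -> normv (A3 - O) = normv (A1 - O) ->
  normv (A3 + s *: ((1 - t) *: A1 + t *: A2 - A3) - O) = normv (A1 - O) ->
  s != 0 -> s * (t ^+ 2 * p - 2 * t * r + q) = q + t * (p - 2 * r).
Proof.
have shift X : X - O = (X - A1) - (O - A1) by rewrite opprB addrA subrK.
rewrite !shift subrr sub0r normvN => OA2 OA3 OQ s_ne0.
have eQ : A3 + s *: ((1 - t) *: A1 + t *: A2 - A3) - A1 = (s * t) *: u + (1 - s) *: v.
  by apply/rowP => j; rewrite !mxE; ring.
rewrite eQ in OQ; have := on_circle_origin OA2 OA3 OQ.
rewrite dotv_lincomb => /eqP; rewrite -subr_eq0 => /eqP circ.
have : s * (s * (t ^+ 2 * p - 2 * t * r + q) - (q + t * (p - 2 * r))) = 0.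
  by rewrite -circ; ring.
by move/eqP; rewrite mulf_eq0 (negbTE s_ne0) subr_eq0 => /eqP.
Qed.

End Triangle.

Theorem mainTheorem19 (R : realType) (n : nat) (A1 A2 A3 : 'rV[R]_n) (t1 : R)
  (Q : 'rV[R]_n) :
  (2 <= n)%N ->
  is_triangle A1 A2 A3 ->
  0 <= t1 -> t1 <= 1 ->
  on_ray A3 ((1 - t1) *: A1 + t1 *: A2) Q ->
  Q != A3 ->
  on_circumcircle A1 A2 A3 Q ->
  let a1 := vangle A1 A2 A3 in
  let a2 := vangle A2 A3 A1 in
  let a3 := vangle A3 A1 A2 in
  let m1 := (sin a2 ^+ 2 + t1 * sin (a1 - a2) * sin a3) * (1 - t1) in
  let m2 := (sin a2 ^+ 2 + t1 * sin (a1 - a2) * sin a3) * t1 in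
  let m3 := - ((1 - t1) * t1 * sin a3 ^+ 2) in
  Q = (m1 + m2 + m3)^-1 *: (m1 *: A1 + m2 *: A2 + m3 *: A3).
Proof.
move=> _ tri _ _ [s [_ eQ]] QA3 [_ [Oc [_ [OA2 [OA3 OQ]]]]] a1 a2 a3 m1 m2 m3.
have s_ne0 : s != 0 by apply: contraNneq QA3; rewrite eQ => ->; rewrite scale0r addr0.
rewrite eQ in OQ; have ratio := circumcevian_ratio OA2 OA3 OQ s_ne0.
have [K K_gt0 [sin2 sin3 sin13]] := triangle_sin_weights tri.
have D_gt0 := triangle_cevian_gt0 tri t1.
rewrite /m1 /m2 /m3 -mulrA sin13 sin2 sin3 eQ -[s](mulfK (lt0r_neq0 D_gt0)) ratio.
apply/rowP => j; rewrite !mxE.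
by field; rewrite (gt_eqF D_gt0) andbT gt_eqF //; nra.
Qed.
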